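(* An element of Thompson's group $F$ represented by a tree diagram $(T_+,T_-)$ with $n$ leaves lies in the $3$-colorable subgroup $\mathcal{F}$ if and only if $\omega(\alpha_k^+)=\omega(\alpha_k^-)$ for all $k=0,\dots,n-1$. Here $\alpha_k^{+}$ and $\alpha_k^-$ denote the binary words of the $k$-th leaves (from the left) of $T_+$ and $T_-$, respectively.
   Context: Thompson's group $F$ is the group of piecewise linear homeomorphisms of $[0,1]$ that are differentiable except at finitely many dyadic rationals with slopes in $2^{\mathbb{Z}}$. A tree diagram $(T_+,T_-)$ is a pair of finite rooted planar binary trees with the same number $n$ of leaves. Each vertex is encoded by the binary word of its path from the root ($0$ = left edge, $1$ = right edge). The diagram represents the element of $F$ mapping $[.\alpha_k^+,.\alpha_k^++2^{-|\alpha_k^+|}]$ affinely onto $[.\alpha_k^-,.\alpha_k^-+2^{-|\alpha_k^-|}]$ for each $k$, where $.\alpha$ denotes the dyadic rational with binary digits $\alpha$. Each element has a unique reduced diagram. The $3$-colorable subgroup $\mathcal{F}$: draw $T_+$ with leaves at $(k,0)$ and root on the line $y=1$, and $T_-$ mirrored below with the same leaves and root on $y=-1$. The edges divide the strip $\{-1\le y\le1\}$ into regions. $\mathcal{F}$ consists of the elements for which these regions admit a coloring with three colors so that regions sharing an edge have different colors. The weight $\omega:\{\text{finite binary words}\}\to\mathbb{Z}_3$ is defined via triples $(L(z),R(z),B(z))$: - $(L,R,B)(\emptyset)=(0,1,2)$, - $(L,R,B)(z0)=(L(z),B(z),R(z))$, - $(L,R,B)(z1)=(B(z),R(z),L(z))$,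 with $\omega(z)=L(z)$. Geometrically, $\omega(z)$ is the color of the region to the left of vertex $z$ in the proper $3$-coloring of the complement of the rooted planar binary tree in which the regions left of, right of and below the root are colored $0,1,2$. *)

From HB Require Import structures.
From mathcomp Require Import all_boot all_order all_algebra.
Set Implicit Arguments. Unset Strict Implicit. Unset Printing Implicit Defensive.
Import Order.TTheory GRing.Theory Num.Theory.

Inductive tree : Type := Leaf | Node of tree & tree.

Fixpoint nleaves (t : tree) : nat :=
  match t with Leaf => 1 | Node l r => nleaves l + nleaves r end.

(* Binary words (false = 0 = left edge, true = 1 = right edge) of the leaves,
   listed from left to right; the first letter is the edge at the root. *)
Fixpoint leaves (t : tree) : seq (seq bool) :=
  match t with
  | Leaf => [:: [::]]
  | Node l r => map (cons false) (leaves l) ++ map (cons true) (leaves r)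
  end.

(* The weight omega.  Colors are the naturals 0,1,2 (representing Z_3). *)
Definition lrb_step (t : nat * nat * nat) (b : bool) : nat * nat * nat :=
  let: (L, R, B) := t in if b then (B, R, L) else (L, B, R).

Definition LRB (z : seq bool) : nat * nat * nat := foldl lrb_step (0, 1, 2) z.

Definition omega (z : seq bool) : nat := (LRB z).1.1.

(* Regions of the strip picture of a diagram with n leaves:
   region k (0 <= k < n) is the region immediately to the left of leaf k
   (region 0 = the unbounded left region), region n is the unbounded right
   region.  Each edge of T_+ (resp. T_-) separates two regions; for an
   internal vertex whose subtree has leaves a..e-1 and whose right child's
   subtree starts at leaf m, the edge to the left child separates regions a
   and m and the edge to the right child separates regions m and e. *)
Fixpoint edge_adj (t : tree) (a : nat) : seq (nat * nat) :=
  match t with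
  | Leaf => [::]
  | Node l r =>
      let m := a + nleaves l in
      [:: (a, m); (m, m + nleaves r)] ++ edge_adj l a ++ edge_adj r m
  end.

(* The diagram (Tp, Tm) is 3-colorable: the regions admit a coloring with
   three colors such that regions sharing an edge get different colors; the
   two unbounded regions (left, right) are also required to be different. *)
Definition colorable (Tp Tm : tree) : Prop :=
  exists c : nat -> 'I_3,
    c 0%N != c (nleaves Tp) /\
    forall p, p \in edge_adj Tp 0 ++ edge_adj Tm 0 -> c p.1 != c p.2.

(* The element of F represented by a diagram, as a function on [0,1]. *)
Section PL.
Variable R : realFieldType.
Local Open Scope ring_scope.

Fixpoint dval (w : seq bool) : R :=
  match w with [::] => 0 | b :: w' => ((b%:R : R) + dval w') / 2 end.

Definition dwidth (w : seq bool) : R := (2 ^+ size w)^-1.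

(* affine map [.p, .p + 2^-|p|] -> [.m, .m + 2^-|m|] *)
Definition aff (p m : seq bool) (x : R) : R :=
  dval m + (x - dval p) * (dwidth m / dwidth p).

Fixpoint pl_eval (ps : seq (seq bool * seq bool)) (x : R) : R :=
  match ps with
  | [::] => x
  | [:: (p, m)] => aff p m x
  | (p, m) :: ps' => if x < dval p + dwidth p then aff p m x else pl_eval ps' x
  end.

Definition diag_fun (Tp Tm : tree) : R -> R :=
  pl_eval (zip (leaves Tp) (leaves Tm)).

Definition diagram (Tp Tm : tree) : Prop := nleaves Tp = nleaves Tm.

Definition represents (Tp Tm : tree) (g : R -> R) : Prop :=
  diagram Tp Tm /\ forall x : R, 0 <= x <= 1 -> diag_fun Tp Tm x = g x.

Definition in_F3 (g : R -> R) : Prop :=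
  exists Tp Tm, represents Tp Tm g /\ colorable Tp Tm.
End PL.

(* The proper 3-coloring of the regions cut out by one tree is unique up to a
   permutation of the colors once the two unbounded regions get distinct
   colors, and in the coloring with colors (0,1,2) left of, right of and below
   the root, the regions left and right of the leaf alpha get the colors L(alpha)
   and R(alpha).  So a diagram is 3-colorable iff the canonical colorings of its
   two trees agree, iff omega agrees on corresponding leaves (the region right
   of leaf k is the region left of leaf k+1, and the last region has color 1 in
   both trees); the whole triples (L,R,B) then agree on corresponding leaves.
   To pass from some colorable diagram of the element to the given one: every
   leaf of the given tree T_+ either lies below a leaf of the other domain tree,
   and then both leaves and their images differ by one common suffix, along
   which the triples (L,R,B) evolve in the same way; or it extends to such a
   leaf by zeros, which extends its image by the same zeros and changes no
   omega. *)

From mathcomp Require Import all_boot all_order all_algebra.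
From mathcomp Require Import zify ring lra.
Set Implicit Arguments. Unset Strict Implicit. Unset Printing Implicit Defensive.
Import Order.TTheory GRing.Theory Num.Theory.

Definition tL (t : nat * nat * nat) := t.1.1.
Definition tR (t : nat * nat * nat) := t.1.2.
Definition tB (t : nat * nat * nat) := t.2.

Definition tricolor (t : nat * nat * nat) : Prop :=
  tL t < 3 /\ tR t < 3 /\ tB t < 3 /\ tL t <> tR t /\ tL t <> tB t /\ tR t <> tB t.

Definition root_colors : nat * nat * nat := (0, 1, 2).

Lemma tricolor_root : tricolor root_colors.
Proof. rewrite /tricolor /tL /tR /tB /=; lia. Qed.

Lemma tricolor_step t b : tricolor t -> tricolor (lrb_step t b).
Proof.
by case: t => [[x y] z]; case: b; rewrite /tricolor /tL /tR /tB /=; lia.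
Qed.

Lemma tricolor_foldl t w : tricolor t -> tricolor (foldl lrb_step t w).
Proof. by elim: w t => [|b w IHw] t //= /(tricolor_step b) /IHw. Qed.

Lemma tricolor_LR_inj t t' : tricolor t -> tricolor t' ->
  tL t = tL t' -> tR t = tR t' -> t = t'.
Proof.
case: t t' => [[x y] z] [[x' y'] z']; rewrite /tricolor /tL /tR /tB /=.
move=> Ht Ht' Ex Ey; subst; congr (_, _, _); lia.
Qed.

Lemma tL_lrb_false t : tL (lrb_step t false) = tL t. Proof. by case: t => [[]]. Qed.
Lemma tR_lrb_false t : tR (lrb_step t false) = tB t. Proof. by case: t => [[]]. Qed.
Lemma tL_lrb_true t : tL (lrb_step t true) = tB t. Proof. by case: t => [[]]. Qed.
Lemma tR_lrb_true t : tR (lrb_step t true) = tR t. Proof. by case: t => [[]]. Qed.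

Lemma LRB_cat w u : LRB (w ++ u) = foldl lrb_step (LRB w) u.
Proof. by rewrite /LRB foldl_cat. Qed.

Lemma omega_cat_zeros w a : omega (w ++ nseq a false) = omega w.
Proof.
rewrite /omega LRB_cat; elim: a (LRB w) => [|a IHa] t //=.
by rewrite IHa; case: t => [[]].
Qed.

Lemma nleaves_gt0 T : 0 < nleaves T.
Proof. by elim: T => //= l IHl r _; rewrite addn_gt0 IHl. Qed.

Lemma size_leaves T : size (leaves T) = nleaves T.
Proof. by elim: T => //= l IHl r IHr; rewrite size_cat !size_map IHl IHr. Qed.

(* Regions are numbered as in [edge_adj]; [t] gives the colors of the regions
   left of, right of and below the root. *)
Fixpoint region_color (T : tree) (t : nat * nat * nat) (i : nat) : nat :=
  match T with
  | Leaf => if i == 0 then tL t else tR t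
  | Node l r => if i <= nleaves l then region_color l (lrb_step t false) i
                else region_color r (lrb_step t true) (i - nleaves l)
  end.

Lemma region_color0 T t : region_color T t 0 = tL t.
Proof. by elim: T t => //= l IHl r _ t; rewrite IHl tL_lrb_false. Qed.

Lemma region_color_nleaves T t : region_color T t (nleaves T) = tR t.
Proof.
elim: T t => //= l _ r IHr t.
rewrite ltn_geF; last by have := nleaves_gt0 r; lia.
by rewrite addKn IHr tR_lrb_true.
Qed.

Lemma region_color_node_l l r t i : i <= nleaves l ->
  region_color (Node l r) t i = region_color l (lrb_step t false) i.
Proof. by move=> /= ->. Qed.

Lemma region_color_node_r l r t j :
  region_color (Node l r) t (nleaves l + j) = region_color r (lrb_step t true) j.
Proof.
case: j => [|j] /=.
  by rewrite addn0 leqnn region_color_nleaves region_color0 tR_lrb_false tL_lrb_true.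
by rewrite ltn_geF ?addKn //; lia.
Qed.

Lemma region_color_lt3 T t i : tricolor t -> region_color T t i < 3.
Proof.
elim: T t i => [|l IHl r IHr] t i /= Ht.
  by case: ifP; rewrite /tricolor in Ht; lia.
by case: ifP => _; [apply: IHl | apply: IHr]; apply: tricolor_step.
Qed.

Lemma region_color_leaf_l T t k : k < nleaves T ->
  region_color T t k = tL (foldl lrb_step t (nth [::] (leaves T) k)).
Proof.
elim: T t k => [|l IHl r IHr] t k; first by case: k.
rewrite [nleaves _]/= [leaves _]/= => Hk; rewrite nth_cat size_map size_leaves.
case: ltnP => Hkl.
  by rewrite (nth_map [::]) ?size_leaves // region_color_node_l ?IHl // ltnW.
rewrite (nth_map [::]) ?size_leaves; last by lia.
by rewrite -[in LHS](subnKC Hkl) region_color_node_r IHr //; lia.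
Qed.

Lemma region_color_leaf_r T t k : k < nleaves T ->
  region_color T t k.+1 = tR (foldl lrb_step t (nth [::] (leaves T) k)).
Proof.
elim: T t k => [|l IHl r IHr] t k; first by case: k.
rewrite [nleaves _]/= [leaves _]/= => Hk; rewrite nth_cat size_map size_leaves.
case: ltnP => Hkl.
  by rewrite (nth_map [::]) ?size_leaves // region_color_node_l ?IHl.
rewrite (nth_map [::]) ?size_leaves; last by lia.
have -> : k.+1 = nleaves l + (k - nleaves l).+1 by lia.
by rewrite region_color_node_r IHr //; lia.
Qed.

Lemma region_color_proper T t a p : tricolor t -> p \in edge_adj T a ->
  [/\ a <= p.1 <= a + nleaves T, a <= p.2 <= a + nleaves T &
      region_color T t (p.1 - a) <> region_color T t (p.2 - a)].
Proof.
elim: T t a => [|l IHl r IHr] t a Ht //.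
rewrite [nleaves _]/= [edge_adj _ _]/= !inE mem_cat.
case/or3P => [/eqP-> | /eqP-> | /orP[Hp | Hp]]; cbn [fst snd].
- rewrite subnn addKn region_color0 region_color_node_l // region_color_nleaves.
  rewrite tR_lrb_false; rewrite /tricolor in Ht; split; lia.
- rewrite -addnBAC // subnn add0n -addnA addKn region_color_node_r.
  rewrite -[nleaves l]addn0 region_color_node_r region_color0 region_color_nleaves.
  rewrite tL_lrb_true tR_lrb_true; rewrite /tricolor in Ht; split; lia.
- have [? ? Hne] := IHl _ a (tricolor_step false Ht) Hp.
  rewrite !region_color_node_l; [split=> //; lia | lia | lia].
- have [? ? Hne] := IHr _ (a + nleaves l) (tricolor_step true Ht) Hp.
  have -> : p.1 - a = nleaves l + (p.1 - (a + nleaves l)) by lia.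
  have -> : p.2 - a = nleaves l + (p.2 - (a + nleaves l)) by lia.
  rewrite !region_color_node_r; split=> //; lia.
Qed.

Lemma region_color_unique T a (c : nat -> nat) :
  (forall i, c i < 3) -> (forall p, p \in edge_adj T a -> c p.1 <> c p.2) ->
  c a <> c (a + nleaves T) ->
  forall i, i <= nleaves T ->
  c (a + i) = region_color T (c a, c (a + nleaves T), 3 - c a - c (a + nleaves T)) i.
Proof.
elim: T a => [|l IHl r IHr] a c3 Hc; first by move=> _ [|[|]] //; rewrite addn0.
rewrite [nleaves _]/= [edge_adj _ _]/= addnA in Hc *.
set m := a + nleaves l in Hc *; set e := m + nleaves r in Hc *.
have Ham : c a <> c m by apply: (Hc (a, m)); rewrite inE eqxx.
have Hme : c m <> c e by apply: (Hc (m, e)); rewrite !inE eqxx orbT.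
have HcL p : p \in edge_adj l a -> c p.1 <> c p.2.
  by move=> Hp; apply: Hc; rewrite !in_cons mem_cat Hp !orbT.
have HcR p : p \in edge_adj r m -> c p.1 <> c p.2.
  by move=> Hp; apply: Hc; rewrite !in_cons mem_cat Hp !orbT.
move=> Hae i Hi; have := c3 a; have := c3 m; have := c3 e => ? ? ?.
case: (leqP i (nleaves l)) => Hil.
  rewrite region_color_node_l // IHl //= -/m; congr region_color; congr (_, _, _); lia.
rewrite -(subnKC (ltnW Hil)) region_color_node_r addnA IHr //; last by lia.
by congr region_color; rewrite /= -/m -/e; congr (_, _, _); lia.
Qed.

Definition relabel (s : nat -> nat) (t : nat * nat * nat) := (s (tL t), s (tR t), s (tB t)).

Lemma lrb_step_relabel s t b : lrb_step (relabel s t) b = relabel s (lrb_step t b).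
Proof. by case: t => [[x y] z]; case: b. Qed.

Lemma region_color_relabel T s t i :
  region_color T (relabel s t) i = s (region_color T t i).
Proof.
elim: T t i => [|l IHl r IHr] t i /=; first by case: eqP.
by case: leqP => _; rewrite -?IHl -?IHr -lrb_step_relabel.
Qed.

Lemma nth_completed_colors_inj u v x y : u < 3 -> v < 3 -> u <> v -> x < 3 -> y < 3 ->
  nth 0 [:: u; v; 3 - u - v] x = nth 0 [:: u; v; 3 - u - v] y -> x = y.
Proof. by case: x y => [|[|[|?]]] [|[|[|?]]] //=; lia. Qed.

Definition same_region_colors (Tp Tm : tree) : Prop :=
  forall i, i <= nleaves Tp ->
    region_color Tp root_colors i = region_color Tm root_colors i.

(* A proper coloring is determined by the colors of the two unbounded regions,
   so both trees' colorings are the same relabelling of their canonical ones. *)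
Lemma colorable_same_region_colors Tp Tm :
  diagram Tp Tm -> colorable Tp Tm -> same_region_colors Tp Tm.
Proof.
rewrite /diagram => En [c [Hc0 Hc]] i Hi.
pose cn j := nat_of_ord (c j); pose n := nleaves Tp.
pose s x := nth 0 [:: cn 0; cn n; 3 - cn 0 - cn n] x.
have cn3 j : cn j < 3 by apply: ltn_ord.
have Hn : cn 0 <> cn n by move/val_inj; apply/eqP.
have Hcol T : nleaves T = n -> (forall p, p \in edge_adj T 0 -> c p.1 != c p.2) ->
    cn i = s (region_color T root_colors i).
  move=> ET HT; rewrite -region_color_relabel.
  have := @region_color_unique T 0 cn cn3; rewrite !add0n ET; apply=> //.
  by move=> p /HT /eqP Hp /val_inj.
have Ep : cn i = s (region_color Tp root_colors i).
  by apply: Hcol => // p Hp; apply: Hc; rewrite mem_cat Hp.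
have Em : cn i = s (region_color Tm root_colors i).
  by apply: Hcol => [|p Hp]; [rewrite -En | apply: Hc; rewrite mem_cat Hp orbT].
apply: (nth_completed_colors_inj (cn3 0) (cn3 n) Hn);
  rewrite ?region_color_lt3 ?tricolor_root //.
exact: etrans (esym Ep) Em.
Qed.

Lemma same_region_colors_colorable Tp Tm :
  diagram Tp Tm -> same_region_colors Tp Tm -> colorable Tp Tm.
Proof.
rewrite /diagram => En HC.
pose c i : 'I_3 := inord (region_color Tp root_colors i).
have Ec i : nat_of_ord (c i) = region_color Tp root_colors i.
  by rewrite /c inordK // region_color_lt3 // tricolor_root.
exists c; split.
  by rewrite -(inj_eq (@ord_inj 3)) !Ec region_color0 region_color_nleaves.
move=> p; rewrite -(inj_eq (@ord_inj 3)) !Ec mem_cat => /orP[] Hp; apply/eqP.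
  by have [_ _] := region_color_proper tricolor_root Hp; rewrite !subn0.
have [H1 H2] := region_color_proper tricolor_root Hp.
by rewrite !subn0 -En in H1 H2 *; rewrite !HC.
Qed.

Lemma omega_leaves_same_region_colors Tp Tm : diagram Tp Tm ->
  (forall k, k < nleaves Tp ->
     omega (nth [::] (leaves Tp) k) = omega (nth [::] (leaves Tm) k)) ->
  same_region_colors Tp Tm.
Proof.
rewrite /diagram => En H i; rewrite leq_eqVlt => /orP[/eqP-> | Hi].
  by rewrite region_color_nleaves En region_color_nleaves.
by rewrite !region_color_leaf_l -?En //; apply: H.
Qed.

Lemma same_region_colors_LRB Tp Tm : diagram Tp Tm -> same_region_colors Tp Tm ->
  forall k, k < nleaves Tp ->
    LRB (nth [::] (leaves Tp) k) = LRB (nth [::] (leaves Tm) k).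
Proof.
rewrite /diagram => En HC k Hk; rewrite /LRB -/root_colors.
apply: tricolor_LR_inj; try exact/tricolor_foldl/tricolor_root.
- by rewrite -!region_color_leaf_l -?En // HC // ltnW.
- by rewrite -!region_color_leaf_r -?En // HC.
Qed.

Lemma leftmost_leaf T : exists a, nseq a false \in leaves T.
Proof.
elim: T => [|l [a Ha] r _]; first by exists 0.
by exists a.+1; rewrite /= mem_cat map_f.
Qed.

Lemma leaf_prefix_or_extension T w :
  (exists2 l, l \in leaves T & exists u, w = l ++ u) \/
  (exists2 l, l \in leaves T & exists a, l = w ++ nseq a false).
Proof.
elim: T w => [|l IHl r IHr] w.
  by left; exists [::]; rewrite ?inE //; exists w.
case: w => [|b w].
  by right; have [a Ha] := leftmost_leaf (Node l r); exists (nseq a false); last exists a.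
case: b; [case: (IHr w) | case: (IHl w)] => -[l' Hl' [v Ev]];
  [left; exists (true :: l') | right; exists (true :: l')
  | left; exists (false :: l') | right; exists (false :: l')];
  by [rewrite /= mem_cat map_f ?orbT | exists v; rewrite Ev].
Qed.

Section PiecewiseLinear.
Variable R : realFieldType.
Local Open Scope ring_scope.
Implicit Types (u v p q : seq bool) (x : R).

Lemma dwidth_cons (b : bool) u : dwidth R (b :: u) = dwidth R u / 2.
Proof. by rewrite /dwidth /= exprS invfM mulrC. Qed.

Lemma dwidth_gt0 u : 0 < dwidth R u.
Proof. by rewrite /dwidth invr_gt0 exprn_gt0. Qed.

Lemma dwidth_cat u v : dwidth R (u ++ v) = dwidth R u * dwidth R v.
Proof. by rewrite /dwidth size_cat exprD invfM. Qed.

Lemma size_dwidth_inj u v : dwidth R u = dwidth R v -> size u = size v.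
Proof.
rewrite /dwidth => /invr_inj; rewrite -!(natrX R 2) => /eqP.
by rewrite eqr_nat eqn_exp2l // => /eqP.
Qed.

Lemma dval_cat u v : dval R (u ++ v) = dval R u + dwidth R u * dval R v.
Proof.
elim: u => [|b u IHu] /=; first by rewrite /dwidth expr0 invr1 add0r mul1r.
by rewrite IHu dwidth_cons; field.
Qed.

Lemma dval_ge0 u : 0 <= dval R u.
Proof. by elim: u => [|b u IHu] //=; rewrite divr_ge0 ?addr_ge0. Qed.

Lemma dval_dwidth_le1 u : dval R u + dwidth R u <= 1.
Proof.
elim: u => [|b u IHu] /=; first by rewrite /dwidth expr0 invr1 add0r.
have : (b%:R : R) <= 1 by case: b.
rewrite dwidth_cons; lra.
Qed.

Lemma dval_inj u v : size u = size v -> dval R u = dval R v -> u = v.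
Proof.
elim: u v => [|b u IHu] [|b' v] //= [Esize] Edval.
have := dval_ge0 u; have := dval_ge0 v; have := dwidth_gt0 u; have := dwidth_gt0 v.
have := dval_dwidth_le1 u; have := dval_dwidth_le1 v => ? ? ? ? ? ?.
have Eb : b = b' by clear IHu Esize; case: b b' Edval => -[] //= ?; exfalso; lra.
by subst b'; congr (_ :: _); apply: IHu => //; lra.
Qed.

Lemma aff_cat p q u x : aff (p ++ u) (q ++ u) x = aff p q x.
Proof.
rewrite /aff !dval_cat !dwidth_cat.
have := dwidth_gt0 p; have := dwidth_gt0 u => ? ?.
by field; rewrite !gt_eqF.
Qed.

Definition in_dyadic u x := dval R u <= x < dval R u + dwidth R u.

Lemma in_dyadic_catl u v x : in_dyadic (u ++ v) x -> in_dyadic u x.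
Proof.
rewrite /in_dyadic dval_cat dwidth_cat => /andP[].
have := dwidth_gt0 u; have := dval_ge0 v; have := dval_dwidth_le1 v => ? ? ?.
have : 0 <= dwidth R u * dval R v by rewrite mulr_ge0 // ltW.
have : dwidth R u * (dval R v + dwidth R v) <= dwidth R u by rewrite ler_piMr // ltW.
rewrite mulrDr => ? ? ? ?; apply/andP; split; lra.
Qed.

Lemma in_dyadic_01 u x : in_dyadic u x -> 0 <= x <= 1.
Proof.
rewrite /in_dyadic => /andP[? ?].
by have := dval_ge0 u; have := dval_dwidth_le1 u; lra.
Qed.

(* An affine map of a dyadic interval onto a dyadic interval determines its
   image interval: compare the images of the left endpoint and the midpoint. *)
Lemma aff_inj p q1 q2 :
  (forall x, in_dyadic p x -> aff p q1 x = aff p q2 x) -> q1 = q2.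
Proof.
have Hp := dwidth_gt0 p.
have aff_mid q : aff p q (dval R p + dwidth R p / 2) = dval R q + dwidth R q / 2.
  by rewrite /aff; field; rewrite gt_eqF.
move=> Eaff.
have E0 : dval R q1 = dval R q2.
  by have := Eaff (dval R p); rewrite /aff subrr !mul0r !addr0 /in_dyadic; apply; lra.
have Emid := Eaff (dval R p + dwidth R p / 2).
rewrite !aff_mid E0 /in_dyadic in Emid.
apply: dval_inj E0; apply: size_dwidth_inj; have := Emid _; lra.
Qed.

Fixpoint tiles (a : R) (ws : seq (seq bool)) (b : R) : Prop :=
  if ws is w :: ws' then dval R w = a /\ tiles (dval R w + dwidth R w) ws' b
  else a = b.

Lemma tiles_cat a ws b ws' c : tiles a ws b -> tiles b ws' c -> tiles a (ws ++ ws') c.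
Proof.
elim: ws a => [|w ws IHws] a /=; first by move->.
by move=> [Ew Hws] Hws'; split; last exact: IHws.
Qed.

Lemma tiles_map_cons (bit : bool) a ws b : tiles a ws b ->
  tiles ((bit%:R + a) / 2) (map (cons bit) ws) ((bit%:R + b) / 2).
Proof.
elim: ws a => [|w ws IHws] a /=; first by move->.
move=> [<- Hws]; split=> //.
have -> : (bit%:R + dval R w) / 2 + dwidth R (bit :: w) =
          (bit%:R + (dval R w + dwidth R w)) / 2.
  by rewrite dwidth_cons; field.
exact: IHws.
Qed.

Lemma tiles_leaves T : tiles 0 (leaves T) 1.
Proof.
elim: T => [|l IHl r IHr] /=; first by split; rewrite // /dwidth expr0 invr1 add0r.
apply: (tiles_cat (b := 1 / 2)).
  have := tiles_map_cons false IHl.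
  have E0 : (false%:R + 0) / 2 = 0 :> R by rewrite addr0 mul0r.
  have E1 : (false%:R + 1) / 2 = 1 / 2 :> R by rewrite add0r.
  by rewrite E0 E1.
have := tiles_map_cons true IHr.
have E0 : (true%:R + 0) / 2 = 1 / 2 :> R by rewrite addr0.
have E1 : (true%:R + 1) / 2 = 1 :> R by rewrite [true%:R]/= -mulr2n divff // pnatr_eq0.
by rewrite E0 E1.
Qed.

Lemma tiles_dval_ge a ws b w : tiles a ws b -> w \in ws -> a <= dval R w.
Proof.
elim: ws a => [|w' ws IHws] a //= [<- Hws]; rewrite inE => /orP[/eqP-> // | Hw].
by have := IHws _ Hws Hw; have := dwidth_gt0 w'; lra.
Qed.

Lemma pl_eval_tiles ps qs a b k x : size ps = size qs -> tiles a ps b ->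
  (k < size ps)%N -> in_dyadic (nth [::] ps k) x ->
  pl_eval (zip ps qs) x = aff (nth [::] ps k) (nth [::] qs k) x.
Proof.
elim: ps qs a k => [|p ps IHps] [|q qs] a k //= [Esize] [_ Hps].
case: k => [|k] /= Hk /[dup] Hx /andP[Hx1 Hx2].
  by case: (zip ps qs) => //= ? ?; rewrite Hx2.
rewrite ltnS in Hk.
have Hzip : zip ps qs != [::].
  by rewrite -size_eq0 size_zip -Esize minnn -lt0n (leq_ltn_trans (leq0n k) Hk).
have Hge := tiles_dval_ge Hps (mem_nth [::] Hk).
case: (zip ps qs) Hzip (IHps _ _ _ Esize Hps Hk Hx) => // pq zs _ <-.
by rewrite ltNge (le_trans Hge Hx1).
Qed.

Lemma diag_fun_leaf Tp Tm k x : diagram Tp Tm -> (k < nleaves Tp)%N ->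
  in_dyadic (nth [::] (leaves Tp) k) x ->
  diag_fun Tp Tm x = aff (nth [::] (leaves Tp) k) (nth [::] (leaves Tm) k) x.
Proof.
move=> En Hk; apply: (pl_eval_tiles (a := 0) (b := 1)); rewrite ?size_leaves //.
exact: tiles_leaves.
Qed.

Lemma diag_fun_leaf_suffix Tp Tm Tp' Tm' k j u :
  diagram Tp Tm -> diagram Tp' Tm' ->
  (forall x, 0 <= x <= 1 -> diag_fun Tp Tm x = diag_fun Tp' Tm' x) ->
  (k < nleaves Tp)%N -> (j < nleaves Tp')%N ->
  nth [::] (leaves Tp) k = nth [::] (leaves Tp') j ++ u ->
  nth [::] (leaves Tm) k = nth [::] (leaves Tm') j ++ u.
Proof.
move=> D D' Efun Hk Hj Ep; apply: (@aff_inj (nth [::] (leaves Tp) k)) => x Hx.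
rewrite -diag_fun_leaf // Efun ?(in_dyadic_01 Hx) // Ep aff_cat.
by apply: diag_fun_leaf => //; apply: (@in_dyadic_catl _ u); rewrite -Ep.
Qed.

Lemma omega_leaves_of_LRB_leaves Tp Tm Tp' Tm' :
  diagram Tp Tm -> represents Tp' Tm' (@diag_fun R Tp Tm) ->
  (forall j, (j < nleaves Tp')%N ->
     LRB (nth [::] (leaves Tp') j) = LRB (nth [::] (leaves Tm') j)) ->
  forall k, (k < nleaves Tp)%N ->
    omega (nth [::] (leaves Tp) k) = omega (nth [::] (leaves Tm) k).
Proof.
move=> D [D' Efun'] ELRB k Hk.
have Efun x : 0 <= x <= 1 -> diag_fun Tp Tm x = diag_fun Tp' Tm' x by move/Efun'.
have [] := leaf_prefix_or_extension Tp' (nth [::] (leaves Tp) k) => -[l].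
  case/(nthP [::]) => j; rewrite size_leaves => Hj <- [u Ep].
  have Eq := diag_fun_leaf_suffix D D' Efun Hk Hj Ep.
  by rewrite Ep Eq /omega !LRB_cat ELRB.
case/(nthP [::]) => j; rewrite size_leaves => Hj <- [a Ea].
have Eq := diag_fun_leaf_suffix D' D Efun' Hj Hk Ea.
have := congr1 (fun t => t.1.1) (ELRB j Hj); rewrite Ea Eq.
by rewrite -!/(omega _) !omega_cat_zeros.
Qed.
End PiecewiseLinear.

Theorem proposition2p1 (R : realFieldType) (Tp Tm : tree) :
  diagram Tp Tm ->
  (in_F3 (@diag_fun R Tp Tm) <->
   forall k, k < nleaves Tp ->
     omega (nth [::] (leaves Tp) k) = omega (nth [::] (leaves Tm) k)).
Proof.
move=> D; split.
- move=> [Tp' [Tm' [Hrep Hcol]]].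
  have D' : diagram Tp' Tm' by case: Hrep.
  apply: (omega_leaves_of_LRB_leaves D Hrep).
  exact/(same_region_colors_LRB D')/colorable_same_region_colors.
- move=> Homega; exists Tp, Tm; split; first by split.
  exact/same_region_colors_colorable/omega_leaves_same_region_colors.
Qed.
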